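(* Consider the UAV-SAR coverage maximization problem (P.1) described in the context, with all system parameters fixed (in particular $\delta_t>0$, $P_{\mathrm{prop}}>0$, $q_{\mathrm{start}}\ge 0$ finite, and $M$ a fixed positive integer). Then the set of numbers of azimuth sweeps $N\in\mathbb{N}$ for which problem (P.1) with that $N$ has a feasible point is finite.
   Context: Fixed system parameters: a time-slot duration $\delta_t>0$; a UAV speed $v>0$; $\Delta_y=\delta_t v$; a positive integer $M$ (number of time slots per azimuth sweep, with $L=M\Delta_y$); a radar depression angle $\theta_d$ and 3dB beamwidth $\Theta_{3\mathrm{dB}}$, with $\theta_1=\theta_d-\Theta_{3\mathrm{dB}}/2$ and $\theta_2=\theta_d+\Theta_{3\mathrm{dB}}/2$; altitude bounds $0<z_{\min}\le z_{\max}$; maximal powers $P_{\mathrm{sar}}^{\max},P_{\mathrm{com}}^{\max}\ge 0$; a constant propulsion power $P_{\mathrm{prop}}>0$; an initial battery energy $q_{\mathrm{start}}\ge 0$; a base station position $\mathbf b=(x_b,y_b,z_b)$; positive constants $B_r,B_c,\tau_p,\mathrm{PRF},c,\gamma,R_{\mathrm{sl}},\mathrm{SNR}_{\min}$ and a positive constant $K$ (collecting $G_tG_r\lambda^3\sigma_0 c\tau_p\mathrm{PRF}\sin^2(\theta_d)/((4\pi)^4 k T_o NF B_r L_{\mathrm{tot}} v)$); and $\Omega=\frac{\cos\theta_1-\cos\theta_2}{\cos\theta_1\cos\theta_2}$. For a given number of azimuth sweeps $N\in\mathbb{N}$, time slots are indexed by $n\in\{1,\dots,NM\}$. Let $\mathcal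 A=\{k\in\{1,\dots,NM\}:(k-1)\bmod M\neq 0\}$ and $\mathcal A^c=\{1,M+1,\dots,(N-1)M+1\}$. The $y$-coordinates are fixed: $y(1)=0$, $y(n+1)=y(n)+c(n)\Delta_y$ for $n\in\{1,\dots,NM-1\}$, where $c(n)=1$ if $\lceil n/M\rceil$ is odd and $c(n)=-1$ otherwise. The optimization variables are real vectors $x(n),z(n),q(n),P_{\mathrm{sar}}(n),P_{\mathrm{com}}(n)$, $n=1,\dots,NM$. Define $d(n)=\sqrt{(x(n)-x_b)^2+(y(n)-y_b)^2+(z(n)-z_b)^2}$, $R(n)=B_c\log_2\!\big(1+\frac{P_{\mathrm{com}}(n)\gamma}{d^2(n)}\big)$, $R_{\min}(n)=B_r\big(\frac{2z(n)\Omega}{c}+\tau_p\big)\mathrm{PRF}$, and $\mathrm{SNR}(n)=\frac{K\,P_{\mathrm{sar}}(n)}{z(n)^3}$. Problem (P.1) for given $N$: maximize $C=\sum_{n=1}^{NM}\Delta_y z(n)(\tan\theta_2-\tan\theta_1)$ subject to C1: $x(1)=-\tan(\theta_1)z(1)$; C2: $x(n)=x(n-1)+z(n-1)\tan\theta_2-z(n)\tan\theta_1$ for all $n\in\mathcal A^c\setminus\{1\}$; C3: $x(n+1)=x(n)$ for all $n\in\mathcal A$; C4: $z(n+1)=z(n)$ for all $n\in\mathcal A$; C5: $P_{\mathrm{sar}}(n+1)=P_{\mathrm{sar}}(n)$ for all $n\in\mathcal A$; C6: $z_{\min}\le z(n)\le z_{\max}$ for all $n$; C7: $\mathrm{SNR}(n)\ge\mathrm{SNR}_{\min}$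 for all $n$; C8: $R(n)\ge R_{\min}(n)+R_{\mathrm{sl}}$ for all $n$; C9: $0\le P_{\mathrm{sar}}(n)\le P_{\mathrm{sar}}^{\max}$ and $0\le P_{\mathrm{com}}(n)\le P_{\mathrm{com}}^{\max}$ for all $n$; C10: $q(1)=q_{\mathrm{start}}$ and $q(n)\ge 0$ for all $n$; C11: $q(n+1)=q(n)-\delta_t\big(P_{\mathrm{com}}(n)+P_{\mathrm{sar}}(n)+P_{\mathrm{prop}}\big)$ for all $n\in\{1,\dots,NM-1\}$. A feasible point for $N$ is an assignment of the variables satisfying C1–C11. *)

From Stdlib Require Import Reals Lra Lia Arith.
From Stdlib Require Export Ensembles Finite_sets.
Open Scope R_scope.

Record params := mkParams {
  delta_t : R; v : R; M : nat;
  theta_d : R; Theta3dB : R;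
  z_min : R; z_max : R;
  Psar_max : R; Pcom_max : R; P_prop : R; q_start : R;
  x_b : R; y_b : R; z_b : R;
  B_r : R; B_c : R; tau_p : R; PRF : R; c_light : R; gamma : R;
  R_sl : R; SNR_min : R; K : R }.

Section Problem.
Variable p : params.

Definition Delta_y : R := delta_t p * v p.
Definition theta1 : R := theta_d p - Theta3dB p / 2.
Definition theta2 : R := theta_d p + Theta3dB p / 2.
Definition Omega : R :=
  (cos theta1 - cos theta2) / (cos theta1 * cos theta2).

Definition ceil_div (n m : nat) : nat := (n + m - 1) / m.

Definition cdir (n : nat) : R :=
  if Nat.odd (ceil_div n (M p)) then 1 else -1.

Fixpoint ycoord (n : nat) : R :=
  match n with
  | O => 0
  | S O => 0
  | S ((S _) as m) => ycoord m + cdir m * Delta_y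
  end.

Definition inA (N k : nat) : Prop :=
  (1 <= k <= N * M p)%nat /\ ((k - 1) mod M p <> 0)%nat.
Definition inAc (N k : nat) : Prop :=
  exists j : nat, (j < N)%nat /\ k = (j * M p + 1)%nat.

Definition log2 (r : R) : R := ln r / ln 2.

Definition dist_bs (x z : nat -> R) (n : nat) : R :=
  sqrt ((x n - x_b p)^2 + (ycoord n - y_b p)^2 + (z n - z_b p)^2).
Definition rate (x z Pcom : nat -> R) (n : nat) : R :=
  B_c p * log2 (1 + Pcom n * gamma p / (dist_bs x z n)^2).
Definition Rmin (z : nat -> R) (n : nat) : R :=
  B_r p * (2 * z n * Omega / c_light p + tau_p p) * PRF p.
Definition SNR (z Psar : nat -> R) (n : nat) : R :=
  K p * Psar n / (z n)^3.

(* Feasibility of (P.1) for a given number N of azimuth sweeps.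
   Variables are sequences indexed by nat; only indices 1..N*M matter. *)
Definition feasible (N : nat) : Prop :=
  exists x z q Psar Pcom : nat -> R,
    x 1%nat = - tan theta1 * z 1%nat /\
    (forall n, inAc N n -> n <> 1%nat ->
                x n = x (n-1)%nat + z (n-1)%nat * tan theta2 - z n * tan theta1) /\
    (forall n, inA N n -> (n + 1 <= N * M p)%nat -> x (n+1)%nat = x n) /\
    (forall n, inA N n -> (n + 1 <= N * M p)%nat -> z (n+1)%nat = z n) /\
    (forall n, inA N n -> (n + 1 <= N * M p)%nat -> Psar (n+1)%nat = Psar n) /\
    (forall n, (1 <= n <= N * M p)%nat ->
       z_min p <= z n <= z_max p /\
       SNR z Psar n >= SNR_min p /\
       rate x z Pcom n >= Rmin z n + R_sl p /\
       0 <= Psar n <= Psar_max p /\ 0 <= Pcom n <= Pcom_max p /\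
       q n >= 0) /\
    q 1%nat = q_start p /\
    (forall n, (1 <= n <= N * M p - 1)%nat ->
                q (n+1)%nat = q n - delta_t p * (Pcom n + Psar n + P_prop p)).

Definition standing_assumptions : Prop :=
  delta_t p > 0 /\ v p > 0 /\ (M p > 0)%nat /\
  0 < z_min p <= z_max p /\
  Psar_max p >= 0 /\ Pcom_max p >= 0 /\ P_prop p > 0 /\ q_start p >= 0 /\
  B_r p > 0 /\ B_c p > 0 /\ tau_p p > 0 /\ PRF p > 0 /\ c_light p > 0 /\
  gamma p > 0 /\ R_sl p > 0 /\ SNR_min p > 0 /\ K p > 0.

End Problem.

(** Every time slot drains at least [delta_t * P_prop > 0] from the battery,
    whatever the radar and communication powers, while the battery level must
    stay nonnegative up to the last of the [N * M] slots.  Hence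
    [(N * M - 1) * delta_t * P_prop <= q_start], which bounds [N]. *)

From Stdlib Require Import Reals Ensembles Finite_sets.
From Stdlib Require Import Lra Lia Finite_sets_facts.

Lemma Finite_nat_lt (B : nat) : Finite nat (fun n : nat => (n < B)%nat).
Proof.
  induction B as [|B IH].
  - replace (fun n : nat => (n < 0)%nat) with (Empty_set nat).
    + apply Empty_is_finite.
    + apply Extensionality_Ensembles; split; intros n Hn; [destruct Hn | unfold In in Hn; lia].
  - replace (fun n : nat => (n < S B)%nat) with (Add nat (fun n => (n < B)%nat) B).
    + apply Union_is_finite; [exact IH | unfold In; lia].
    + apply Extensionality_Ensembles; split; intros n Hn.
      * destruct Hn as [n Hn | n Hn]; [unfold In in *; lia | destruct Hn; unfold In; lia].
      * unfold In in Hn; destruct (Nat.eq_dec n B) as [-> | Hne].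
        -- right; constructor.
        -- left; unfold In; lia.
Qed.

Lemma Finite_nat_of_INR_mul_bounded (P : nat -> Prop) (d C : R) :
  0 < d -> (forall n, P n -> INR n * d <= C) -> Finite nat P.
Proof.
  intros Hd HP.
  destruct (INR_archimed d C Hd) as [B HB].
  apply Finite_downward_closed with (A := fun n : nat => (n < B)%nat).
  { apply Finite_nat_lt. }
  intros n Hn; unfold In.
  destruct (Nat.lt_ge_cases n B) as [Hlt | Hge]; [exact Hlt |].
  specialize (HP n Hn).
  assert (INR B * d <= INR n * d) by (apply Rmult_le_compat_r; [lra | now apply le_INR]).
  lra.
Qed.

Lemma le_sub_mul_of_steps (q : nat -> R) (d : R) (L : nat) :
  (forall n, (1 <= n < L)%nat -> q (S n) <= q n - d) ->
  forall k, (1 <= k <= L)%nat -> q k <= q 1%nat - INR (k - 1) * d.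
Proof.
  intros Hstep k. induction k as [|k IH]; intros Hk; [lia |].
  destruct (Nat.eq_dec k 0) as [-> | Hk0]; [simpl; lra |].
  replace (S k - 1)%nat with (S (k - 1)) by lia.
  rewrite S_INR.
  specialize (Hstep k ltac:(lia)). specialize (IH ltac:(lia)).
  lra.
Qed.

Section Feasibility.
Variable p : params.
Hypothesis Hp : standing_assumptions p.

Lemma battery_drain_step (q Psar Pcom : nat -> R) (n : nat) :
  0 <= Psar n -> 0 <= Pcom n ->
  q (n + 1)%nat = q n - delta_t p * (Pcom n + Psar n + P_prop p) ->
  q (S n) <= q n - delta_t p * P_prop p.
Proof.
  destruct Hp as (Hdt & _).
  intros HPsar HPcom Hq.
  rewrite <- Nat.add_1_r, Hq.
  assert (0 <= delta_t p * (Pcom n + Psar n)) by (apply Rmult_le_pos; lra).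
  lra.
Qed.

Lemma feasible_sweeps_bound (N : nat) :
  feasible p N -> INR N * (delta_t p * P_prop p) <= q_start p + delta_t p * P_prop p.
Proof.
  destruct Hp as (Hdt & _ & HM & _ & _ & _ & HPprop & Hqs & _).
  assert (Hd : 0 < delta_t p * P_prop p) by (apply Rmult_lt_0_compat; lra).
  intros (x & z & q & Psar & Pcom & _ & _ & _ & _ & _ & Hslot & Hq1 & Hq).
  destruct (Nat.eq_dec N 0) as [-> | HN]; [simpl; lra |].
  set (L := (N * M p)%nat).
  assert (HL : (1 <= L <= L)%nat) by (unfold L; nia).
  assert (Hdrain : q L <= q_start p - INR (L - 1) * (delta_t p * P_prop p)).
  { rewrite <- Hq1. apply (le_sub_mul_of_steps q _ L); [| exact HL].
    intros n Hn.
    destruct (Hslot n ltac:(lia)) as (_ & _ & _ & [HPsar _] & [HPcom _] & _).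
    apply (battery_drain_step q Psar Pcom n HPsar HPcom), Hq. lia. }
  destruct (Hslot L HL) as (_ & _ & _ & _ & _ & HqL).
  assert (HNL : INR N <= INR (L - 1) + 1).
  { rewrite <- S_INR. apply le_INR. unfold L. nia. }
  nra.
Qed.

End Feasibility.

Theorem proposition1 (p : params) :
  standing_assumptions p ->
  Finite nat (fun N : nat => feasible p N).
Proof.
  intros Hp.
  assert (Hd : 0 < delta_t p * P_prop p).
  { destruct Hp as (Hdt & _ & _ & _ & _ & _ & HPprop & _). now apply Rmult_lt_0_compat. }
  apply Finite_nat_of_INR_mul_bounded
    with (d := delta_t p * P_prop p) (C := q_start p + delta_t p * P_prop p).
  - exact Hd.
  - intros N. now apply feasible_sweeps_bound.
Qed.
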